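(* Let $0\le z<t\le d\le n$ and consider any $((t,n;z))_q$ QSS scheme whose secret consists of $m$ qudits. Then $$\mathrm{CC}_n(d)\geq\frac{d\,m}{d-z}.$$
   Context: A QSS scheme on $n$ parties is an encoding of a quantum secret into $n$ shares, share $j$ given to party $j\in[n]$. A set $P\subseteq[n]$ is authorized if the secret can be recovered from the shares of the parties in $P$, and unauthorized if those shares contain no information about the secret. A $((t,n;z))_q$ QSS scheme is one in which every set of at least $t$ parties is authorized, every set of at most $z$ parties is unauthorized, and the secret consists of $m$ qudits and the shares of qudits, all of dimension $q$. For an authorized set $A$, a fixed (a priori) portion of each share of a party in $A$ is sent to a combiner, and $\mathrm{CC}_n(A)=\sum_{j\in A}h_{j,A}$ with $h_{j,A}$ the number of qudits sent by party $j$. For $t\le d\le n$, $\mathrm{CC}_n(d)=\max_{A\subseteq[n],|A|=d}\mathrm{CC}_n(A)$. *)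

From mathcomp Require Import all_boot all_algebra.
From mathcomp Require Import reals complex.
Set Implicit Arguments. Unset Strict Implicit. Unset Printing Implicit Defensive.
Import GRing.Theory Num.Theory.
Local Open Scope ring_scope.

Section Quantum.
Variable C : numClosedFieldType.

(* A linear operator from the space with orthonormal basis I to the space
   with orthonormal basis J, as its matrix: entry (j, i). *)
Definition Op (I J : finType) := J -> I -> C.

Definition mulop (I J K : finType) (A : Op J K) (B : Op I J) : Op I K :=
  fun k i => \sum_(j : J) A k j * B j i.

Definition adjop (I J : finType) (A : Op I J) : Op J I :=
  fun i j => (A j i)^*.

Definition idop (I : finType) : Op I I := fun i i' => (i == i')%:R.

Definition is_density (I : finType) (rho : Op I I) : Prop :=
  [/\ forall i j, rho j i = (rho i j)^*,
      forall v : I -> C, 0 <= \sum_(i : I) \sum_(j : I) (v i)^* * rho i j * v j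
    & \sum_(i : I) rho i i = 1].

(* quantum channels (CPTP maps) given by a finite list of Kraus operators *)
Definition is_channel (I J : finType) (ks : seq (Op I J)) : Prop :=
  forall i i', \sum_(K <- ks) mulop (adjop K) K i i' = idop i i'.

Definition apply_ch (I J : finType) (ks : seq (Op I J)) (rho : Op I I) : Op J J :=
  fun j j' => \sum_(K <- ks) mulop (mulop K rho) (adjop K) j j'.

End Quantum.

Section QSS.
Variables (q : nat) (n : nat) (s : 'I_n -> nat).

(* qudit positions of the shares: (party j, k-th qudit of share j) *)
Definition Pos := {j : 'I_n & 'I_(s j)}.

(* computational basis labels of the full system of shares *)
Definition ShareCfg := {ffun Pos -> 'I_q}.

Definition CfgOn (S : {set Pos}) := {ffun {p : Pos | p \in S} -> 'I_q}.

Definition restr (S : {set Pos}) (x : ShareCfg) : CfgOn S :=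
  [ffun p => x (val p)].
Arguments restr S x : clear implicits.

Definition posOf (P : {set 'I_n}) : {set Pos} := [set p : Pos | tag p \in P].

Variable C : numClosedFieldType.

Definition ptrace (S : {set Pos}) (rho : Op C ShareCfg ShareCfg) :
    Op C (CfgOn S) (CfgOn S) :=
  fun a b => \sum_(x : ShareCfg | restr S x == a)
             \sum_(y : ShareCfg | (restr S y == b) &&
                                   [forall p, (p \notin S) ==> (x p == y p)])
               rho x y.
Arguments ptrace S rho : clear implicits.

Definition SecCfg (m : nat) := {ffun 'I_m -> 'I_q}.

Variable m : nat.

Definition recoverable_from (E : seq (Op C (SecCfg m) ShareCfg)) (S : {set Pos}) :
    Prop :=
  exists Rc : seq (Op C (CfgOn S) (SecCfg m)),
    is_channel Rc /\
    forall rho, is_density rho ->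
      forall a b, apply_ch Rc (ptrace S (apply_ch E rho)) a b = rho a b.

Definition authorized (E : seq (Op C (SecCfg m) ShareCfg)) (P : {set 'I_n}) :=
  recoverable_from E (posOf P).

Definition unauthorized (E : seq (Op C (SecCfg m) ShareCfg)) (P : {set 'I_n}) :=
  forall rho sigma, is_density rho -> is_density sigma ->
    forall a b, ptrace (posOf P) (apply_ch E rho) a b
                = ptrace (posOf P) (apply_ch E sigma) a b.

Definition is_QSS (t z : nat) (E : seq (Op C (SecCfg m) ShareCfg)) : Prop :=
  [/\ is_channel E,
      forall P : {set 'I_n}, (t <= #|P|)%N -> authorized E P
    & forall P : {set 'I_n}, (#|P| <= z)%N -> unauthorized E P].

End QSS.

(* Fix an authorized set A with |A| = d and let S = H A be the qudits it
   sends. For every z-subset Z of A, the secret must sit in the qudits of S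
   outside the shares of Z: the encoding's Kraus amplitudes, viewed as a vector
   on (secret reference) * (shares of Z) * (rest of S) * (environment), are
   decoupled between the secret and the shares of Z because Z is unauthorized,
   and between the secret and the environment because S recovers the secret
   (Knill-Laflamme). Comparing ranks of flattenings then gives
   q^m <= q^|S :\: Z|. Averaging m <= |S :\: Z| over all z-subsets of A
   gives d m <= (d - z) |S|. *)

From mathcomp Require Import all_boot all_algebra.
From mathcomp Require Import reals complex.
From mathcomp Require Import zify ring.
Set Implicit Arguments. Unset Strict Implicit. Unset Printing Implicit Defensive.
Import GRing.Theory Num.Theory.

Section Averaging.
Variables (T I : finType) (f : T -> I) (A : {set I}) (S : {set T}) (z : nat).
Hypothesis sSA : S \subset f @^-1: A.

Let draws := [set Z : {set I} | Z \subset A & #|Z| == z].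

Lemma sum_card_setD_preimset :
  \sum_(Z in draws) #|S :\: f @^-1: Z| = #|S| * 'C(#|A|.-1, z).
Proof.
(* Count pairs (Z, x) with x in S and f x not in Z: each such x avoids
   exactly the z-subsets of A :\ f x. *)
transitivity (\sum_(Z in draws) \sum_(x in S) (f x \notin Z : nat)).
  apply: eq_bigr => Z _; rewrite -sum1_card big_mkcond [RHS]big_mkcond /=.
  by apply: eq_bigr => x _; rewrite !inE; case: (x \in S); case: (f x \in Z).
rewrite exchange_big -sum_nat_const; apply: eq_bigr => x Sx.
have Afx : f x \in A by move/subsetP: sSA => /(_ x Sx); rewrite inE.
transitivity #|[set Z : {set I} | Z \subset A :\ f x & #|Z| == z]|.
  rewrite -sum1_card big_mkcond [RHS]big_mkcond /=; apply: eq_bigr => Z _.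
  rewrite !inE subsetD1.
  by case: (Z \subset A); case: (f x \in Z); case: (#|Z| == z).
by rewrite cards_draws (cardsD1 (f x) A) Afx.
Qed.

Lemma leq_average_setD_preimset (k : nat) : z < #|A| ->
  (forall Z : {set I}, Z \subset A -> #|Z| = z -> k <= #|S :\: f @^-1: Z|) ->
  #|A| * k <= (#|A| - z) * #|S|.
Proof.
move=> ltzA leSZ.
have le_sum : #|draws| * k <= \sum_(Z in draws) #|S :\: f @^-1: Z|.
  rewrite -sum_nat_const; apply: leq_sum => Z; rewrite inE => /andP[sZA /eqP cZ].
  exact: leSZ.
have binA_gt0 : 0 < 'C(#|A|.-1, z) by rewrite bin_gt0; lia.
rewrite -(leq_pmul2l binA_gt0) mulnA [_ * #|A|]mulnC mul_bin_down.
rewrite -cards_draws -/draws -mulnA [X in _ <= X]mulnCA leq_mul2l.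
by rewrite [X in _ <= X]mulnC -sum_card_setD_preimset le_sum orbT.
Qed.

End Averaging.

Lemma leq_of_cross_mul (D r l k : nat) :
  D * r <= l * k -> D * l <= r * k -> 0 < r -> 0 < l -> D <= k.
Proof. by move=> *; nia. Qed.

Local Open Scope ring_scope.

Lemma sum_pair (V : nmodType) (I J : finType) (G : I * J -> V) :
  \sum_p G p = \sum_i \sum_j G (i, j).
Proof. by rewrite pair_bigA; apply: eq_bigr => -[]. Qed.

Section DeltaSums.
Variable R : pzSemiRingType.

Lemma sum_deltal (T : finType) (t0 : T) (G : T -> R) :
  \sum_t (t == t0)%:R * G t = G t0.
Proof.
rewrite (bigD1 t0) //= eqxx mul1r big1 ?addr0 // => t /negbTE ->.
by rewrite mul0r.
Qed.

Lemma sum_deltar (T : finType) (t0 : T) (G : T -> R) :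
  \sum_t G t * (t == t0)%:R = G t0.
Proof.
rewrite (bigD1 t0) //= eqxx mulr1 big1 ?addr0 // => t /negbTE ->.
by rewrite mulr0.
Qed.

Lemma sum_delta2l (T : finType) (a b : T) (c : R) (G : T -> R) :
  \sum_t ((t == a)%:R + c * (t == b)%:R) * G t = G a + c * G b.
Proof.
under eq_bigr => t _ do rewrite mulrDl -mulrA.
by rewrite big_split /= -big_distrr /= !sum_deltal.
Qed.

End DeltaSums.

Section FunMatrixRank.
Variable F : fieldType.

Lemma sum_enum_val (I : finType) (G : I -> F) :
  \sum_(i : I) G i = \sum_(k < #|I|) G (enum_val k).
Proof. by rewrite -(big_enum_val G); apply: eq_bigl => i; rewrite inE. Qed.

Definition fmx (I J : finType) (f : I -> J -> F) : 'M[F]_(#|I|, #|J|) :=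
  \matrix_(i, j) f (enum_val i) (enum_val j).

Definition frank (I J : finType) (f : I -> J -> F) := \rank (fmx f).

Lemma eq_frank (I J : finType) (f g : I -> J -> F) :
  (forall i j, f i j = g i j) -> frank f = frank g.
Proof. by move=> fg; congr (\rank _); apply/matrixP=> i j; rewrite !mxE fg. Qed.

Lemma fmx_mul (I J K : finType) (f : I -> J -> F) (g : J -> K -> F) :
  fmx (fun i k => \sum_j f i j * g j k) = fmx f *m fmx g.
Proof.
by apply/matrixP=> i k; rewrite !mxE sum_enum_val; apply: eq_bigr => j _; rewrite !mxE.
Qed.

Lemma frank_mull (I J K : finType) (f : I -> J -> F) (g : J -> K -> F) :
  (frank (fun i k => (\sum_j f i j * g j k)%R) <= frank f)%N.
Proof. by rewrite /frank fmx_mul mxrankM_maxl. Qed.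

Lemma frank_mulr (I J K : finType) (f : I -> J -> F) (g : J -> K -> F) :
  (frank (fun i k => (\sum_j f i j * g j k)%R) <= frank g)%N.
Proof. by rewrite /frank fmx_mul mxrankM_maxr. Qed.

Lemma frank_delta (I : finType) : frank (fun i j : I => (i == j)%:R) = #|I|.
Proof.
rewrite /frank (_ : fmx _ = 1%:M) ?mxrank1 //; apply/matrixP=> i j.
by rewrite !mxE (inj_eq enum_val_inj).
Qed.

Lemma frank_scale (I J : finType) (c : F) (f : I -> J -> F) :
  c != 0 -> frank (fun i j => c * f i j) = frank f.
Proof.
move=> c0; rewrite /frank (_ : fmx _ = c *: fmx f) ?mxrank_scale_nz //.
by apply/matrixP=> i j; rewrite !mxE.
Qed.

Lemma frank_eq0 (I J : finType) (f : I -> J -> F) :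
  frank f = 0%N -> forall i j, f i j = 0.
Proof.
move=> /eqP; rewrite mxrank_eq0 => /eqP /matrixP f0 i j.
by have := f0 (enum_rank i) (enum_rank j); rewrite !mxE !enum_rankK.
Qed.

Lemma frank_factor (I J : finType) (f : I -> J -> F) :
  exists (g : I -> 'I_(frank f) -> F) (h : 'I_(frank f) -> J -> F),
    forall i j, f i j = \sum_k g i k * h k j.
Proof.
exists (fun i k => col_base (fmx f) (enum_rank i) k).
exists (fun k j => row_base (fmx f) k (enum_rank j)).
move=> i j; have /matrixP/(_ (enum_rank i) (enum_rank j)) := mulmx_base (fmx f).
by rewrite !mxE !enum_rankK => <-.
Qed.

(* Gaussian elimination: [col_ebase] and [row_ebase] are invertible and
   [fmx w = col_ebase *m pid_mx r *m row_ebase]. *)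
Lemma frank_sandwich_delta (U V : finType) (w : U -> V -> F) :
  exists (P : 'I_(frank w) -> U -> F) (Q : V -> 'I_(frank w) -> F),
    forall k k', \sum_u P k u * \sum_v w u v * Q v k' = (k == k')%:R.
Proof.
set A := fmx w; set r := frank w.
pose P' : 'M_(r, #|U|) := pid_mx r *m invmx (col_ebase A).
pose Q' : 'M_(#|V|, r) := invmx (row_ebase A) *m pid_mx r.
have PAQ : P' *m (A *m Q') = 1%:M.
  rewrite -[X in P' *m (X *m Q')](mulmx_ebase A) /P' /Q' !mulmxA.
  rewrite mulmxKV ?col_ebase_unit // mulmxK ?row_ebase_unit // !mul_pid_mx.
  have rU : (r <= #|U|)%N := rank_leq_row A.
  have rV : (r <= #|V|)%N := rank_leq_col A.
  by rewrite -/r minnn (minn_idPr rU) minnn (minn_idPr rV) pid_mx_1.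
exists (fun k u => P' k (enum_rank u)), (fun v k => Q' (enum_rank v) k) => k k'.
move/matrixP: PAQ => /(_ k k'); rewrite !mxE => <-.
rewrite sum_enum_val; apply: eq_bigr => i _; rewrite !mxE enum_valK; congr (_ * _).
by rewrite sum_enum_val; apply: eq_bigr => j _; rewrite !mxE enum_valK.
Qed.

Lemma frank_flatten_le (X Y Z : finType) (psi : X -> Y -> Z -> F) :
  (frank (fun (z : Z) (yx : Y * X) => psi yx.2 yx.1 z)
    <= frank (fun (x : X) (zy : Z * Y) => psi x zy.2 zy.1) * #|Y|)%N.
Proof.
set G := fun (x : X) (zy : Z * Y) => psi x zy.2 zy.1.
have [g [h gh]] := frank_factor G.
have -> : frank (fun (z : Z) (yx : Y * X) => psi yx.2 yx.1 z) =
    frank (fun z (yx : Y * X) => \sum_(ky : 'I_(frank G) * Y)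
             h ky.1 (z, ky.2) * ((ky.2 == yx.1)%:R * g yx.2 ky.1)).
  apply: eq_frank => z [y x] /=; rewrite sum_pair /=.
  rewrite [psi x y z](gh x (z, y)); apply: eq_bigr => k _.
  under eq_bigr => y' _ do rewrite mulrCA.
  by rewrite sum_deltal mulrC.
apply: leq_trans (frank_mull _ _) _.
by apply: leq_trans (rank_leq_col _) _; rewrite card_prod card_ord.
Qed.

Definition blockdiag (A U V : finType) (w : U -> V -> F) (p : A * U) (p' : A * V) :=
  (p.1 == p'.1)%:R * w p.2 p'.2.

Lemma blockdiag_mul (A U V W : finType) (f : U -> V -> F) (g : V -> W -> F) p p'' :
  \sum_(p' : A * V) blockdiag f p p' * blockdiag g p' p'' =
  blockdiag (fun u w => \sum_v f u v * g v w) p p''.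
Proof.
rewrite sum_pair /blockdiag /=.
under eq_bigr => a _ do under eq_bigr => v _ do rewrite mulrACA -natrM mulnb.
rewrite (bigD1 p''.1) //= eqxx andbT -big_distrr /= [X in _ + X]big1 ?addr0 // => a neq.
by apply: big1 => v _; rewrite (negbTE neq) andbF mul0r.
Qed.

Lemma frank_blockdiag_ge (A U : finType) (w : U -> U -> F) :
  (#|A| * frank w <= frank (@blockdiag A _ _ w))%N.
Proof.
have [P [Q PwQ]] := frank_sandwich_delta w.
have -> : (#|A| * frank w)%N = frank (fun p p' : A * 'I_(frank w) => (p == p')%:R).
  by rewrite frank_delta card_prod card_ord.
rewrite (@eq_frank _ _ _ (fun p p' => \sum_p1 blockdiag P p p1 *
            \sum_p2 blockdiag w p1 p2 * blockdiag Q p2 p')); last first.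
  move=> p p'; under eq_bigr => p1 _ do rewrite blockdiag_mul.
  by rewrite blockdiag_mul /blockdiag PwQ -natrM mulnb -xpair_eqE -!surjective_pairing.
apply: leq_trans (frank_mulr _ _) _.
exact: frank_mull.
Qed.

End FunMatrixRank.

Section GramRank.
Variable C : numClosedFieldType.

Lemma mxrank_mul_conjT (m n : nat) (A : 'M[C]_(m, n)) :
  \rank (A *m (map_mx Num.conj A)^T) = \rank A.
Proof.
apply/eqP; rewrite eqn_leq mxrankM_maxl /=.
set B := (map_mx Num.conj A)^T; set K := kermx (A *m B).
have KA0 : K *m A = 0.
  set M := K *m A.
  have MM0 : M *m (map_mx Num.conj M)^T = 0.
    by rewrite /M map_mxM trmx_mul -/B mulmxA -(mulmxA K) mulmx_ker mul0mx.
  apply/matrixP => i j; rewrite [RHS]mxE; apply/eqP; rewrite -mul_conjC_eq0; apply/eqP.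
  have /matrixP/(_ i i) := MM0; rewrite !mxE.
  under eq_bigr => k _ do rewrite !mxE.
  by move/psumr_eq0P; apply=> // k _; apply: mul_conjC_ge0.
have /mxrankS : (K <= kermx A)%MS by apply/sub_kermxP.
rewrite !mxrank_ker.
by have := rank_leq_row A; have := rank_leq_row (A *m B); lia.
Qed.

Lemma frank_gram (I J : finType) (f : I -> J -> C) :
  frank (fun i i' => \sum_j f i j * (f i' j)^*) = frank f.
Proof.
rewrite /frank -[RHS]mxrank_mul_conjT; congr (\rank _); apply/matrixP => i k.
by rewrite !mxE sum_enum_val; apply: eq_bigr => j _; rewrite !mxE.
Qed.

Lemma frank_ge_gram_blockdiag (A U J : finType) (f : A * U -> J -> C) (w : U -> U -> C) :
  (forall p p', \sum_j f p j * (f p' j)^* = blockdiag w p p') ->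
  (#|A| * frank w <= frank f)%N.
Proof. by move=> /eq_frank fw; rewrite -[frank f]frank_gram fw frank_blockdiag_ge. Qed.

Section DecoupledMarginals.
Variables (A U Y E : finType) (psi : A -> U -> Y -> E -> C).
Variables (w : U -> U -> C) (l : E -> E -> C).
Hypothesis psiU :
  forall a b u v, \sum_y \sum_e psi a u y e * (psi b v y e)^* = (a == b)%:R * w u v.
Hypothesis psiE :
  forall a b e f, \sum_u \sum_y psi a u y e * (psi b u y f)^* = (a == b)%:R * l e f.

Let flatE e (auy : A * U * Y) := psi auy.1.1 auy.1.2 auy.2 e.

Lemma frank_flatE : (0 < #|A|)%N -> frank flatE = frank l.
Proof.
move=> A_gt0; rewrite -frank_gram -[frank l](@frank_scale _ _ _ #|A|%:R); last first.
  by rewrite pnatr_eq0 -lt0n.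
apply: eq_frank => e f; rewrite /flatE !sum_pair /=.
under eq_bigr => a _ do rewrite psiE eqxx mul1r.
by rewrite sumr_const mulr_natl.
Qed.

Lemma frank_marginalE_gt0 a u y e : psi a u y e != 0 -> (0 < frank l)%N.
Proof.
move=> nz; have A_gt0 : (0 < #|A|)%N by apply/card_gt0P; exists a.
rewrite lt0n -(frank_flatE A_gt0); apply: contra nz => /eqP/frank_eq0.
by move/(_ e (a, u, y))/eqP.
Qed.

Lemma card_mul_frank_le : (#|A| * frank w <= frank l * #|Y|)%N.
Proof.
have [A0|A_gt0] := posnP #|A|; first by rewrite A0.
have le_AU : (#|A| * frank w <=
    frank (fun (au : A * U) (ye : Y * E) => psi au.1 au.2 ye.1 ye.2))%N.
  by apply: frank_ge_gram_blockdiag => -[a u] [b v]; rewrite sum_pair; apply: psiU.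
apply: leq_trans le_AU _; rewrite -(frank_flatE A_gt0).
exact: (frank_flatten_le (fun e y (au : A * U) => psi au.1 au.2 y e)).
Qed.

End DecoupledMarginals.

(* Read [psi] as a vector of A * U * Y * E: the hypotheses say that its
   reduced states on A * U and on A * E are products with a maximally mixed
   state on A, i.e. A is decoupled from U and from E, so A must fit into Y.
   Flattening ranks: |A| rk w <= rk (AU | YE) <= |Y| rk (E | AUY) = |Y| rk l,
   and symmetrically with U and E exchanged. *)
Lemma card_le_decoupled_marginals (A U Y E : finType) (psi : A -> U -> Y -> E -> C)
    (w : U -> U -> C) (l : E -> E -> C) :
  (forall a b u v, \sum_y \sum_e psi a u y e * (psi b v y e)^* = (a == b)%:R * w u v) ->
  (forall a b e f, \sum_u \sum_y psi a u y e * (psi b u y f)^* = (a == b)%:R * l e f) ->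
  (exists a u y e, psi a u y e != 0) ->
  (#|A| <= #|Y|)%N.
Proof.
move=> psiU psiE [a [u [y [e nz]]]].
pose psi' a e y u := psi a u y e.
have psi'E : forall a b u v,
    \sum_e \sum_y psi' a e y u * (psi' b e y v)^* = (a == b)%:R * w u v.
  by move=> *; rewrite exchange_big psiU.
have psi'U : forall a b e f,
    \sum_y \sum_u psi' a e y u * (psi' b f y u)^* = (a == b)%:R * l e f.
  by move=> *; rewrite exchange_big psiE.
apply: (leq_of_cross_mul (card_mul_frank_le psiU psiE)).
- exact: (card_mul_frank_le psi'U psi'E).
- exact: (frank_marginalE_gt0 psi'E (nz : psi' a e y u != 0)).
- exact: (frank_marginalE_gt0 psiE nz).
Qed.

End GramRank.

Section Configurations.
Variables (q n : nat) (s : 'I_n -> nat) (d0 : 'I_q).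
Local Notation Pos := (Pos s).
Local Notation X := (ShareCfg q s).
Local Notation CfgOn := (@CfgOn q n s).
Local Notation restr := (@restr q n s).

Definition extend (P : {set Pos}) (u : CfgOn P) : X :=
  [ffun p => if insub p is Some p' then u p' else d0].

Definition glue (P : {set Pos}) (x y : X) : X :=
  [ffun p => if p \in P then x p else y p].

Definition agree_off (P : {set Pos}) (x y : X) :=
  [forall p, (p \notin P) ==> (x p == y p)].

Lemma glueE (P : {set Pos}) (x y : X) p : glue P x y p = if p \in P then x p else y p.
Proof. by rewrite ffunE. Qed.

Lemma extendE (P : {set Pos}) (u : CfgOn P) p (Pp : p \in P) :
  extend u p = u (exist _ p Pp).
Proof. by rewrite ffunE insubT. Qed.

Lemma restrE (P : {set Pos}) (x : X) p (Pp : p \in P) :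
  restr P x (exist _ p Pp) = x p.
Proof. by rewrite ffunE. Qed.

Lemma extend_restr (P : {set Pos}) (x : X) p : p \in P -> extend (restr P x) p = x p.
Proof. by move=> Pp; rewrite (extendE _ Pp) restrE. Qed.

(* A parametrization of all configurations by their restriction to [P] and a
   complementary coordinate in [W] which determines them outside [P]. *)
Record splitting (P : {set Pos}) (W : finType) := Splitting {
  join :> CfgOn P -> W -> X;
  coord : X -> W;
  restr_join : forall u w, restr P (join u w) = u;
  agree_off_join : forall u w u' w', agree_off P (join u w) (join u' w') = (w == w');
  join_restr : forall x, join (restr P x) (coord x) = x }.

Section Splitting.
Variables (C : nmodType) (P : {set Pos}) (W : finType) (g : splitting P W).

Lemma coord_join u w : coord g (g u w) = w.
Proof.
apply/eqP; rewrite -(agree_off_join g u _ u w).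
by rewrite -{1}(restr_join g u w) join_restr; apply/forallP => p; rewrite eqxx implybT.
Qed.

Lemma sum_splitting (F : X -> C) : \sum_x F x = \sum_u \sum_w F (g u w).
Proof.
rewrite pair_bigA /= (reindex (fun p : CfgOn P * W => g p.1 p.2)) //.
apply: onW_bij; exists (fun x => (restr P x, coord g x)) => [[u w]|x] /=.
  by rewrite restr_join coord_join.
exact: join_restr.
Qed.

Lemma sum_restr_eq (F : X -> C) u : \sum_(x | restr P x == u) F x = \sum_w F (g u w).
Proof.
rewrite big_mkcond sum_splitting (bigD1 u) //= [X in _ + X]big1 ?addr0 => [|u' neq].
  by apply: eq_bigr => w _; rewrite restr_join eqxx.
by apply: big1 => w _; rewrite restr_join (negbTE neq).
Qed.

End Splitting.

Lemma ptrace_splitting (C : numClosedFieldType) (P : {set Pos}) (W : finType)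
    (g : splitting P W) (rho : Op C X X) u v :
  ptrace (S := P) rho u v = \sum_w rho (g u w) (g v w).
Proof.
rewrite /ptrace (sum_restr_eq g); apply: eq_bigr => w _.
rewrite big_mkcondr (sum_restr_eq g) /=.
under eq_bigr => w' _ do
  (have := agree_off_join g u w v w'; rewrite /agree_off => ->).
by rewrite -big_mkcond (big_pred1 w) // => w'; rewrite /= eq_sym.
Qed.

Section ComplSplitting.
Variable P : {set Pos}.

Definition compl_join (u : CfgOn P) (w : CfgOn (~: P)) : X := glue P (extend u) (extend w).

Lemma restr_compl_join u w : restr P (compl_join u w) = u.
Proof. by apply/ffunP => -[p Pp]; rewrite restrE glueE Pp (extendE _ Pp). Qed.

Lemma agree_off_compl_join u w u' w' :
  agree_off P (compl_join u w) (compl_join u' w') = (w == w').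
Proof.
apply/forallP/eqP => [agr|<- p]; last by rewrite !glueE; case: ifP; rewrite ?eqxx.
apply/ffunP => -[p Pp]; have nPp : p \notin P by rewrite -in_setC.
by move/implyP: (agr p) => /(_ nPp); rewrite !glueE (negbTE nPp) !(extendE _ Pp) => /eqP.
Qed.

Lemma compl_join_restr x : compl_join (restr P x) (restr (~: P) x) = x.
Proof.
apply/ffunP => p; rewrite glueE; case: ifP => Pp; first exact: extend_restr.
by apply: extend_restr; rewrite in_setC Pp.
Qed.

Definition compl_splitting :=
  Splitting restr_compl_join agree_off_compl_join compl_join_restr.

Lemma restr_compl_join_disjoint (R : {set Pos}) u w : [disjoint R & P] ->
  restr R (compl_join u w) = restr R (extend w).
Proof. by move=> RP; apply/ffunP => -[p Rp]; rewrite !restrE glueE (disjointFr RP Rp). Qed.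

Lemma glue_compl_join (R : {set Pos}) x u w : [disjoint R & P] ->
  glue R x (compl_join u w) = compl_join u (restr (~: P) (glue R x (extend w))).
Proof.
move=> RP; apply/ffunP => p; rewrite !glueE.
have [Pp|nPp] := boolP (p \in P); first by rewrite (disjointFl RP Pp).
by rewrite extend_restr ?in_setC // glueE.
Qed.

End ComplSplitting.

Section ThreeSplitting.
Variables (P1 P2 : {set Pos}).
Hypothesis P12 : [disjoint P1 & P2].
Let P3 := ~: (P1 :|: P2).

Let notin_P1 p : p \in P2 -> p \notin P1.
Proof. by apply: contraTN => /(disjointFr P12) ->. Qed.

Let in_P3 p : (p \in P3) = (p \notin P1) && (p \notin P2).
Proof. by rewrite in_setC in_setU negb_or. Qed.

Definition three_join (u : CfgOn P1) (w : CfgOn P2 * CfgOn P3) : X :=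
  glue P1 (extend u) (glue P2 (extend w.1) (extend w.2)).

Lemma restr_three_join u w : restr P1 (three_join u w) = u.
Proof. by apply/ffunP => -[p Pp]; rewrite restrE glueE Pp (extendE _ Pp). Qed.

Lemma restr2_three_join u w : restr P2 (three_join u w) = w.1.
Proof.
apply/ffunP => -[p Pp]; rewrite restrE !glueE Pp (extendE _ Pp).
by rewrite (negbTE (notin_P1 Pp)).
Qed.

Lemma restr3_three_join u w : restr P3 (three_join u w) = w.2.
Proof.
apply/ffunP => -[p Pp]; rewrite restrE !glueE (extendE _ Pp).
by have /andP[/negbTE-> /negbTE->] : (p \notin P1) && (p \notin P2) by rewrite -in_P3.
Qed.

Lemma agree_off_three_join u w u' w' :
  agree_off P1 (three_join u w) (three_join u' w') = (w == w').
Proof.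
apply/forallP/eqP => [agr|<- p]; last first.
  by apply/implyP => /negbTE nP1p; rewrite !glueE nP1p.
have eq_off : forall p, p \notin P1 -> three_join u w p = three_join u' w' p.
  by move=> p nP1p; move/implyP/(_ nP1p)/eqP: (agr p).
clear agr; case: w w' eq_off => [w2 w3] [w2' w3'] eq_off; congr (_, _).
  rewrite -[w2](restr2_three_join u (w2, w3)) -[w2'](restr2_three_join u' (w2', w3')).
  apply/ffunP => -[p Pp]; rewrite !restrE; apply: eq_off.
  exact: notin_P1.
rewrite -[w3](restr3_three_join u (w2, w3)) -[w3'](restr3_three_join u' (w2', w3')).
by apply/ffunP => -[p Pp]; rewrite !restrE; apply: eq_off; move: Pp; rewrite in_P3 => /andP[].
Qed.

Lemma three_join_restr x : three_join (restr P1 x) (restr P2 x, restr P3 x) = x.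
Proof.
apply/ffunP => p; rewrite !glueE /=; case: ifP => P1p; first exact: extend_restr.
case: ifP => P2p; first exact: extend_restr.
by apply: extend_restr; rewrite in_P3 P1p P2p.
Qed.

Lemma glue_three_join u y (u3 u3' : CfgOn P3) :
  glue P3 (extend u3') (three_join u (y, u3)) = three_join u (y, u3').
Proof.
apply/ffunP => p; rewrite !glueE /=.
by case P1p: (p \in P1); case P2p: (p \in P2); rewrite in_P3 P1p P2p.
Qed.

Definition three_splitting :=
  Splitting restr_three_join agree_off_three_join three_join_restr.

Lemma sum_restr3_eq (V : nmodType) (F : X -> V) u3 :
  \sum_(x | restr P3 x == u3) F x = \sum_u \sum_y F (three_join u (y, u3)).
Proof.
rewrite big_mkcond (sum_splitting three_splitting); apply: eq_bigr => u _.
rewrite sum_pair; apply: eq_bigr => y _ /=.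
rewrite (bigD1 u3) //= restr3_three_join eqxx [X in _ + X]big1 ?addr0 // => u3' neq.
by rewrite restr3_three_join (negbTE neq).
Qed.

End ThreeSplitting.

End Configurations.
Arguments extend {q n s} d0 {P} u.

Section Quantum.
Variable C : numClosedFieldType.

Lemma sum_normsq_eq0 (T : finType) (F : T -> C) :
  \sum_t F t * (F t)^* = 0 -> forall t, F t = 0.
Proof.
move=> /psumr_eq0P F0 t; apply/eqP; rewrite -mul_conjC_eq0; apply/eqP.
by apply: F0 => // t' _; apply: mul_conjC_ge0.
Qed.

Lemma mul_sum_conj (I : finType) (f g v : I -> C) :
  (\sum_a f a * v a) * (\sum_b g b * v b)^* =
  \sum_a \sum_b v a * (v b)^* * (f a * (g b)^*).
Proof.
rewrite rmorph_sum big_distrlr; apply: eq_bigr => a _; apply: eq_bigr => b _ /=.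
by rewrite rmorphM; ring.
Qed.

Definition pure_density (I : finType) (v : I -> C) : Op C I I :=
  fun a b => (\sum_i v i * (v i)^*)^-1 * (v a * (v b)^*).

Lemma is_density_pure (I : finType) (v : I -> C) :
  \sum_i v i * (v i)^* != 0 -> is_density (pure_density v).
Proof.
rewrite /pure_density; set N := \sum_i _ => N0.
have N_ge0 : 0 <= N by apply: sumr_ge0 => i _; apply: mul_conjC_ge0.
have NVc : (N^-1)^* = N^-1 by rewrite fmorphV /= conj_Creal ?ger0_real.
split.
- by move=> i j; rewrite !rmorphM /= NVc conjCK [v j * _]mulrC.
- move=> x.
  have -> : \sum_i \sum_j (x i)^* * (N^-1 * (v i * (v j)^*)) * x j =
      N^-1 * ((\sum_i (x i)^* * v i) * (\sum_j (x j)^* * v j)^*).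
    rewrite rmorph_sum big_distrlr big_distrr /=; apply: eq_bigr => i _.
    rewrite big_distrr; apply: eq_bigr => j _ /=.
    by rewrite rmorphM /= conjCK; ring.
  by rewrite mulr_ge0 ?invr_ge0 ?mul_conjC_ge0.
- by rewrite -big_distrr /= mulVf.
Qed.

Lemma apply_ch_ext (I J : finType) (ks : seq (Op C I J)) (rho rho' : Op C I I) x y :
  (forall a b, rho a b = rho' a b) -> apply_ch ks rho x y = apply_ch ks rho' x y.
Proof.
move=> rho_eq; apply: eq_bigr => K _; apply: eq_bigr => b _; congr (_ * _).
by apply: eq_bigr => a _; rewrite rho_eq.
Qed.

Lemma apply_ch_mixed (I J T : finType) (ks : seq (Op C I J)) (z : C)
    (al : T -> I -> C) x y :
  apply_ch ks (fun a b => z * \sum_t al t a * (al t b)^*) x y =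
  z * \sum_(K <- ks) \sum_t (\sum_a K x a * al t a) * (\sum_b K y b * al t b)^*.
Proof.
rewrite /apply_ch big_distrr; apply: eq_bigr => K _; rewrite /mulop /adjop.
transitivity (z * \sum_t \sum_a \sum_b (K x a * al t a) * (K y b * al t b)^*); last first.
  by congr (_ * _); apply: eq_bigr => t _; rewrite rmorph_sum big_distrlr.
rewrite big_distrr /=.
under eq_bigr => b _ do rewrite big_distrl /=.
under eq_bigr => b _ do under eq_bigr => a _ do
  rewrite mulrCA big_distrr big_distrr big_distrl /=.
rewrite exchange_big /=; under eq_bigr => a _ do rewrite exchange_big /=.
rewrite exchange_big /=; apply: eq_bigr => t _; rewrite big_distrr /=.
apply: eq_bigr => a _; rewrite big_distrr /=; apply: eq_bigr => b _.
by rewrite rmorphM /=; ring.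
Qed.

Lemma apply_ch_pure (I J : finType) (ks : seq (Op C I J)) (z : C) (v : I -> C) x y :
  apply_ch ks (fun a b => z * (v a * (v b)^*)) x y =
  z * \sum_(K <- ks) (\sum_a K x a * v a) * (\sum_b K y b * v b)^*.
Proof.
have := apply_ch_mixed ks z (fun (_ : 'I_1) => v) x y.
under [in RHS]eq_bigr => K _ do rewrite big_ord1.
by move=> <-; apply: apply_ch_ext => a b; rewrite big_ord1.
Qed.

Lemma channel_kraus_neq0 (I J : finType) (ks : seq (Op C I J)) a :
  is_channel ks -> exists i x, tnth (in_tuple ks) i x a != 0.
Proof.
move=> chK; have /existsP[i /existsP[x nz]] :
  [exists i, [exists x, tnth (in_tuple ks) i x a != 0]]; last by exists i, x.
apply: contraT => /existsPn ks0; move: (chK a a).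
rewrite /idop eqxx big_tnth big1 => [/eqP|i _]; first by rewrite eq_sym oner_eq0.
have /existsPn K0 := ks0 i.
by rewrite /mulop big1 // => x _; rewrite (eqP (negbNE (K0 x))) mulr0.
Qed.

Lemma sesquilinear_scalar (I : finType) (T : I -> I -> C) (t : C) :
  (forall v : I -> C, \sum_i v i * (v i)^* != 0 ->
     \sum_a \sum_b v a * (v b)^* * T a b = (\sum_i v i * (v i)^*) * t) ->
  forall a b, T a b = (a == b)%:R * t.
Proof.
move=> formT.
pose e (a : I) (c : C) (b x : I) : C := (x == a)%:R + c * (x == b)%:R.
have form_e a c b : \sum_x \sum_y e a c b x * (e a c b y)^* * T x y =
    T a a + c^* * T a b + c * T b a + c * c^* * T b b.
  under eq_bigr => x _ do under eq_bigr => y _ do rewrite -mulrA.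
  under eq_bigr => x _ do rewrite -big_distrr /=.
  rewrite sum_delta2l.
  under eq_bigr => y _ do rewrite rmorphD rmorphM /= !rmorph_nat.
  rewrite sum_delta2l.
  under eq_bigr => y _ do rewrite rmorphD rmorphM /= !rmorph_nat.
  by rewrite sum_delta2l; ring.
have norm_e a c b : \sum_x e a c b x * (e a c b x)^* = (e a c b a)^* + c * (e a c b b)^*.
  exact: sum_delta2l.
have nz (c : C) : 1 + c * c^* != 0 by rewrite lt0r_neq0 // ltr_wpDr ?mul_conjC_ge0.
have diag a : T a a = t.
  have := formT (e a 0 a); rewrite norm_e form_e /e eqxx conjC0 !(mul0r, addr0) conjC1.
  by rewrite mul1r => ->; rewrite ?oner_eq0.
move=> a b; have [<-|neq] := eqVneq a b; first by rewrite diag mul1r.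
have off (c : C) : c^* * T a b + c * T b a = 0.
  have nba : (b == a) = false by rewrite eq_sym (negbTE neq).
  have := formT (e a c b); rewrite norm_e form_e /e !eqxx (negbTE neq) nba.
  rewrite !diag !(mulr0, mulr1, addr0, add0r) conjC1 => /(_ (nz c)) eqt.
  have -> : c^* * T a b + c * T b a =
    (t + c^* * T a b + c * T b a + c * c^* * t) - (1 + c * c^*) * t by ring.
  by rewrite eqt subrr.
have := off 'i; rewrite conjCi => offi.
have := off 1; rewrite conjC1 !mul1r => off1.
have : 2%:R * 'i * T a b = 0.
  have -> : 2%:R * 'i * T a b = 'i * (T a b + T b a) - (- 'i * T a b + 'i * T b a) by ring.
  by rewrite off1 offi mulr0 subr0.
by move/eqP; rewrite !mulf_eq0 pnatr_eq0 (negbTE (neq0Ci C)) /= => /eqP ->; rewrite mul0r.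
Qed.

Lemma kraus_scalar_of_identity (I T : finType) (a0 : I) (G : T -> I -> I -> C) :
  (forall (v : I -> C) c c',
     \sum_t (\sum_a G t c a * v a) * (\sum_b G t c' b * v b)^* = v c * (v c')^*) ->
  forall t c a, G t c a = (c == a)%:R * G t a0 a0.
Proof.
move=> fixG.
have off t c a : c != a -> G t c a = 0.
  move=> neq; have := fixG (fun b => (b == a)%:R) c c.
  under eq_bigr => t' _ do rewrite !sum_deltar.
  by rewrite (negbTE neq) mul0r => /sum_normsq_eq0; apply.
have diag t a b : G t a a = G t b b.
  have [->//|neq] := eqVneq a b.
  pose v x : C := (x == a)%:R + 1 * (x == b)%:R.
  have Gv t' c : \sum_x G t' c x * v x = G t' c a + G t' c b.
    by rewrite -[G t' c b]mul1r -sum_delta2l; apply: eq_bigr => x _; rewrite mulrC.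
  have Gab t' : G t' a a - G t' b b = \sum_x G t' a x * v x - \sum_x G t' b x * v x.
    by rewrite !Gv (off t' a b neq) (off t' b a) 1?eq_sym // addr0 add0r.
  apply/eqP; rewrite -subr_eq0; apply/eqP; move: t; apply: sum_normsq_eq0.
  under eq_bigr => t' _ do rewrite Gab rmorphB /= mulrBl !mulrBr.
  rewrite !sumrB !fixG /v !eqxx (negbTE neq) eq_sym (negbTE neq) /=.
  by rewrite !(mulr0, addr0, add0r) conjC1; ring.
move=> t c a; have [->|neq] := eqVneq c a; first by rewrite mul1r (diag t a a0).
by rewrite (off t c a neq) mul0r.
Qed.

Lemma channel_isometry (U V : finType) (ks : seq (Op C U V)) (f f' : U -> C) :
  is_channel ks ->
  \sum_(K <- ks) \sum_c (\sum_u K c u * f u) * (\sum_u K c u * f' u)^* =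
  \sum_u f u * (f' u)^*.
Proof.
move=> chK.
have delta u u' : (u' == u)%:R = \sum_(K <- ks) \sum_c (K c u')^* * K c u :> C.
  by have := chK u' u; rewrite /idop /mulop /adjop => <-.
transitivity (\sum_(K <- ks) \sum_u \sum_u' \sum_c K c u * f u * (K c u' * f' u')^*).
  apply: eq_bigr => K _; under eq_bigr => c _ do rewrite rmorph_sum big_distrlr.
  by rewrite exchange_big; apply: eq_bigr => u _; rewrite exchange_big.
under [RHS]eq_bigr => u _ do rewrite -[f u * _](sum_deltar u (fun u' => f u * (f' u')^*)).
under [RHS]eq_bigr => u _ do under eq_bigr => u' _ do rewrite delta big_distrr /=.
rewrite exchange_big; apply: eq_bigr => u _; rewrite exchange_big.
apply: eq_bigr => u' _; apply: eq_bigr => K _.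
rewrite big_distrr; apply: eq_bigr => c _ /=.
by rewrite rmorphM /=; ring.
Qed.

End Quantum.

Section Scheme.
Variables (q n : nat) (s : 'I_n -> nat) (d0 : 'I_q) (C : numClosedFieldType) (m : nat).
Local Notation Pos := (Pos s).
Local Notation X := (ShareCfg q s).
Local Notation Sc := (SecCfg q m).
Local Notation CfgOn := (@CfgOn q n s).
Local Notation restr := (@restr q n s).
Variable E : seq (Op C Sc X).
Local Notation K := (tnth (in_tuple E)).

Lemma ptrace_encode_pure (P : {set Pos}) (W : finType) (g : splitting q P W)
    (z : C) (v : Sc -> C) u u' :
  ptrace (S := P) (apply_ch E (fun a b => z * (v a * (v b)^*))) u u' =
  z * \sum_(t : 'I_(size E) * W)
        (\sum_a K t.1 (g u t.2) a * v a) * (\sum_b K t.1 (g u' t.2) b * v b)^*.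
Proof.
rewrite (ptrace_splitting g).
under eq_bigr => w _ do rewrite apply_ch_pure big_tnth.
by rewrite -big_distrr /= sum_pair exchange_big.
Qed.

Lemma recoverable_knill_laflamme (S : {set Pos}) : recoverable_from E S ->
  exists lam : 'I_(size E) * CfgOn (~: S) -> 'I_(size E) * CfgOn (~: S) -> C,
  forall i j w w' a b,
    \sum_u K i (compl_join d0 u w) a * (K j (compl_join d0 u w') b)^* =
    (a == b)%:R * lam (i, w) (j, w').
Proof.
move=> [Rc [chR recR]].
pose R := tnth (in_tuple Rc).
pose G (t : 'I_(size Rc) * ('I_(size E) * CfgOn (~: S))) (c a : Sc) :=
  \sum_u R t.1 c u * K t.2.1 (compl_join d0 u t.2.2) a.
have fixG v c c' :
    \sum_t (\sum_a G t c a * v a) * (\sum_b G t c' b * v b)^* = v c * (v c')^*.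
  pose be (t : 'I_(size E) * CfgOn (~: S)) u :=
    \sum_a K t.1 (compl_join d0 u t.2) a * v a.
  have Gv t c1 : \sum_a G t c1 a * v a = \sum_u R t.1 c1 u * be t.2 u.
    under eq_bigr => a _ do rewrite big_distrl /=.
    rewrite exchange_big; apply: eq_bigr => u _; rewrite big_distrr.
    by apply: eq_bigr => a _; rewrite /= mulrA.
  have [v0|N0] := eqVneq (\sum_i v i * (v i)^*) 0.
    have v0' := sum_normsq_eq0 v0; rewrite v0' mul0r; apply: big1 => t _.
    by rewrite big1 ?mul0r // => a _; rewrite v0' mulr0.
  have := recR _ (is_density_pure N0) c c'.
  set N := \sum_i v i * (v i)^*; rewrite /pure_density.
  rewrite (@apply_ch_ext _ _ _ _ _ (fun u u' => N^-1 * \sum_t be t u * (be t u')^*));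
    last by move=> u u'; rewrite (ptrace_encode_pure (compl_splitting d0 S)).
  rewrite apply_ch_mixed big_tnth => /(mulfI (invr_neq0 N0)) <-.
  by rewrite sum_pair; apply: eq_bigr => k _; apply: eq_bigr => t _; rewrite !Gv.
pose a0 : Sc := [ffun=> d0].
have Gscalar := kraus_scalar_of_identity a0 fixG.
exists (fun p p' => \sum_k G (k, p) a0 a0 * (G (k, p') a0 a0)^*).
move=> i j w w' a b; rewrite -(channel_isometry _ _ chR) big_tnth big_distrr.
apply: eq_bigr => k _.
transitivity (\sum_c G (k, (i, w)) c a * (G (k, (j, w')) c b)^*); first by [].
under eq_bigr => c _ do rewrite (Gscalar _ c a) (Gscalar _ c b) rmorphM rmorph_nat mulrACA.
by rewrite -big_distrl /= sum_deltal eq_sym.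
Qed.

Lemma knill_laflamme_off (S R : {set Pos}) : [disjoint R & S] -> recoverable_from E S ->
  exists lam : 'I_(size E) * CfgOn R -> 'I_(size E) * CfgOn R -> C,
  forall i j r r' a b,
    \sum_(x | restr R x == r) K i x a * (K j (glue R (extend d0 r') x) b)^* =
    (a == b)%:R * lam (i, r) (j, r').
Proof.
move=> RS /recoverable_knill_laflamme [lamS lamSP].
pose w2 (r' : CfgOn R) (w : CfgOn (~: S)) := restr (~: S) (glue R (extend d0 r') (extend d0 w)).
exists (fun p p' => \sum_(w | restr R (extend d0 w) == p.2) lamS (p.1, w) (p'.1, w2 p'.2 w)).
move=> i j r r' a b /=.
rewrite big_mkcond (sum_splitting (compl_splitting d0 S)) exchange_big /=.
rewrite big_distrr [RHS]big_mkcond; apply: eq_bigr => w _ /=.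
under eq_bigr => u _ do rewrite restr_compl_join_disjoint // glue_compl_join //.
by case: eqP => _; [apply: lamSP | rewrite big1].
Qed.

Section Decoupling.
Variables (Z : {set 'I_n}) (S : {set Pos}).
Let P1 := posOf s Z.
Let P2 := S :\: P1.
Let P3 := ~: (P1 :|: P2).

Let P12 : [disjoint P1 & P2].
Proof. by rewrite disjoint_sym disjoints_subset /P2 setDE subsetIr. Qed.

Let P3S : [disjoint P3 & S].
Proof.
rewrite disjoints_subset /P3 setCS; apply/subsetP => p Sp.
by rewrite in_setU in_setD Sp andbT orbN.
Qed.

(* The amplitude of the Kraus operator [e.2] from the secret basis state [a]
   to the share configuration equal to [u] on the shares of [Z], to [y] on
   the rest of [S], and to [e.1] elsewhere. *)
Definition psi (a : Sc) (u : CfgOn P1) (y : CfgOn P2) (e : CfgOn P3 * 'I_(size E)) :=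
  K e.2 (three_join d0 u (y, e.1)) a.

Definition share_gram (a b : Sc) (u v : CfgOn P1) :=
  \sum_y \sum_e psi a u y e * (psi b v y e)^*.

Lemma ptrace_encode_pure_gram (z : C) (v : Sc -> C) u u' :
  ptrace (S := P1) (apply_ch E (fun a b => z * (v a * (v b)^*))) u u' =
  z * \sum_a \sum_b v a * (v b)^* * share_gram a b u u'.
Proof.
rewrite (ptrace_encode_pure (three_splitting d0 P12)); congr (_ * _).
under eq_bigr => t _ do rewrite mul_sum_conj.
rewrite exchange_big; apply: eq_bigr => a _; rewrite exchange_big; apply: eq_bigr => b _.
rewrite /share_gram big_distrr sum_pair exchange_big sum_pair; apply: eq_bigr => y _.
rewrite big_distrr sum_pair; apply: eq_bigr => u3 _; apply: eq_bigr => i _.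
by rewrite /psi.
Qed.

Let b0 : Sc := [ffun=> d0].

Lemma unauthorized_share_gram : unauthorized E Z ->
  forall a b u v, share_gram a b u v = (a == b)%:R * share_gram b0 b0 u v.
Proof.
move=> unZ a b u v; move: a b; apply: sesquilinear_scalar => w Nw_neq0.
pose e x : C := (x == b0)%:R.
have Ne : \sum_x e x * (e x)^* = 1 by rewrite sum_deltal /e eqxx conjC1.
have Ne_neq0 : \sum_x e x * (e x)^* != 0 by rewrite Ne oner_eq0.
have form_e : \sum_a \sum_b e a * (e b)^* * share_gram a b u v = share_gram b0 b0 u v.
  under eq_bigr => a _ do under eq_bigr => b _ do rewrite -mulrA.
  under eq_bigr => a _ do rewrite -big_distrr /=.
  rewrite sum_deltal; under eq_bigr => b _ do rewrite /e rmorph_nat.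
  exact: sum_deltal.
have := unZ _ _ (is_density_pure Nw_neq0) (is_density_pure Ne_neq0) u v.
rewrite /pure_density !ptrace_encode_pure_gram Ne invr1 mul1r form_e => <-.
by rewrite mulrA mulfV ?mul1r.
Qed.

Lemma recoverable_env_gram : recoverable_from E S ->
  exists l, forall a b e f,
    \sum_u \sum_y psi a u y e * (psi b u y f)^* = (a == b)%:R * l e f.
Proof.
move=> /(knill_laflamme_off P3S) [lam lamP].
exists (fun e f => lam (e.2, e.1) (f.2, f.1)) => a b [u3 i] [u3' j] /=.
rewrite -lamP (sum_restr3_eq d0 P12); apply: eq_bigr => u _; apply: eq_bigr => y _.
by rewrite /psi /= glue_three_join.
Qed.

Lemma secret_le_share_setD : (1 < q)%N -> is_channel E -> unauthorized E Z ->
  recoverable_from E S -> (m <= #|S :\: posOf s Z|)%N.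
Proof.
move=> q_gt1 chE unZ recS.
have [l psiE] := recoverable_env_gram recS.
have psi_neq0 : exists a u y e, psi a u y e != 0.
  have [i [x nz]] := channel_kraus_neq0 b0 chE.
  exists b0, (restr P1 x), (restr P2 x), (restr P3 x, i).
  by rewrite /psi /= three_join_restr.
have := card_le_decoupled_marginals (unauthorized_share_gram unZ) psiE psi_neq0.
by rewrite !card_ffun !card_ord card_sig leq_exp2l.
Qed.

End Decoupling.

End Scheme.

Theorem corollary3 (R : realType) (q m n t d z : nat) (s : 'I_n -> nat)
    (E : seq (Op R[i] (SecCfg q m) (ShareCfg q s)))
    (H : {set 'I_n} -> {set Pos s}) :
  (2 <= q)%N -> (z < t)%N -> (t <= d)%N -> (d <= n)%N ->
  is_QSS t z E ->
  (forall A : {set 'I_n}, #|A| = d ->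
     H A \subset posOf s A /\ recoverable_from E (H A)) ->
  ((d * m)%:R / (d - z)%:R : rat)
    <= ((\max_(A : {set 'I_n} | #|A| == d) #|H A|)%N)%:R.
Proof.
move=> q_gt1 lt_zt le_td le_dn [chE _ unE] recH.
have d0 : 'I_q := Ordinal (ltnW q_gt1).
pose A0 : {set 'I_n} := [set widen_ord le_dn i | i : 'I_d].
have cardA0 : #|A0| = d.
  by rewrite card_imset ?card_ord // => i j /(congr1 val) ij; apply: val_inj.
have [sHA recHA] := recH A0 cardA0.
have lt_zA0 : (z < #|A0|)%N by rewrite cardA0; apply: leq_trans le_td.
have := leq_average_setD_preimset sHA lt_zA0 (fun Z _ cardZ =>
  secret_le_share_setD d0 q_gt1 chE (unE Z (eq_leq cardZ)) recHA).
rewrite cardA0 => avg.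
have le_max : (#|H A0| <= \max_(A : {set 'I_n} | #|A| == d) #|H A|)%N.
  by apply: (leq_bigmax_cond (P := fun A : {set 'I_n} => #|A| == d)); rewrite cardA0.
rewrite ler_pdivrMr ?ltr0n ?subn_gt0 ?(leq_trans lt_zt) // -natrM ler_nat.
by apply: leq_trans avg _; rewrite mulnC leq_mul2r le_max orbT.
Qed.
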